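(* Let $x,y\in S^d$ and $0\le\theta\le\pi$. If $\langle\bar x,\bar y\rangle<\cos\theta$, then $V_\kappa[\chi_{B(x,\theta)}](y)=0$.
   Context: Here $S^d$ is the unit sphere in $\mathbb R^{d+1}$, $\kappa=(\kappa_1,\dots,\kappa_{d+1})$ with $\kappa_i\ge0$, and $V_\kappa$ is the intertwining operator for the group $\mathbb Z_2^{d+1}$, given explicitly by $$V_\kappa f(x)=c_\kappa\int_{[-1,1]^{d+1}}f(x_1t_1,\dots,x_{d+1}t_{d+1})\prod_{i=1}^{d+1}(1+t_i)(1-t_i^2)^{\kappa_i-1}\,dt,$$ with $c_\kappa$ chosen so that $V_\kappa1=1$ (if some $\kappa_i=0$, the $i$-th factor integral is replaced by the limit $\frac12[g(1)+g(-1)]$). For $z\in\mathbb R^{d+1}$, $\bar z=(|z_1|,\dots,|z_{d+1}|)$. $B(x,\theta)=\{y\in\mathbb R^{d+1}:\|y\|\le1,\langle x,y\rangle\ge\cos\theta\}$ and $\chi_E$ is the indicator of $E$. *)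

From HB Require Import structures.
From mathcomp Require Import all_boot all_order all_algebra.
From mathcomp Require Import all_classical all_reals all_analysis.
Set Implicit Arguments. Unset Strict Implicit. Unset Printing Implicit Defensive.
Import Order.TTheory GRing.Theory Num.Theory.
Import numFieldNormedType.Exports.
Local Open Scope classical_set_scope.
Local Open Scope ring_scope.

Definition inner (R : realType) (n : nat) (x y : 'I_n -> R) : R :=
  \sum_(i < n) x i * y i.

Definition vnorm (R : realType) (n : nat) (x : 'I_n -> R) : R :=
  Num.sqrt (\sum_(i < n) x i ^+ 2).

Definition vabs (R : realType) (n : nat) (z : 'I_n -> R) : 'I_n -> R :=
  fun i => `|z i|.

Definition Bcap (R : realType) (n : nat) (x : 'I_n -> R) (theta : R)
  : set ('I_n -> R) :=
  [set y | vnorm y <= 1 /\ cos theta <= inner x y].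

Definition wgt (R : realType) (k t : R) : R :=
  (1 + t) * ((1 - t ^+ 2) `^ (k - 1)).

Definition cst (R : realType) (k : R) : R :=
  (fine (\int[@lebesgue_measure R]_(s in `[(-1)%R, 1%R]) (wgt k s)%:E))^-1.

(* one-dimensional averaging operator in the variable t_i:
   c_k \int_{-1}^1 g(t)(1+t)(1-t^2)^(k-1) dt  if k > 0,
   (g(1)+g(-1))/2 if k = 0 (the limit case). *)
Definition int1 (R : realType) (k : R) (g : R -> \bar R) : \bar R :=
  if k == 0 then ((g 1%R + g (-1)%R) * (2^-1)%:E)%E
  else ((cst k)%:E *
        \int[@lebesgue_measure R]_(s in `[(-1)%R, 1%R]) ((wgt k s)%:E * g s))%E.

Definition upd (R : realType) (n : nat) (t : 'I_n -> R) (i : 'I_n) (u : R)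
  : 'I_n -> R := fun j => if j == i then u else t j.

Fixpoint iterint (R : realType) (n : nat) (kappa : 'I_n -> R) (s : seq 'I_n)
  (F : ('I_n -> R) -> \bar R) (t : 'I_n -> R) : \bar R :=
  match s with
  | [::] => F t
  | i :: s' => int1 (kappa i) (fun u => iterint kappa s' F (upd t i u))
  end.

(* The intertwining operator V_kappa for Z_2^n:
   V_kappa f(x) = c_kappa \int_{[-1,1]^n} f(x_1 t_1,...,x_n t_n)
                   prod_i (1+t_i)(1-t_i^2)^(kappa_i-1) dt
   (as an iterated integral, coordinate by coordinate). *)
Definition Vkappa (R : realType) (n : nat) (kappa : 'I_n -> R)
  (f : ('I_n -> R) -> R) (x : 'I_n -> R) : \bar R :=
  iterint kappa (enum 'I_n) (fun t => (f (fun i => x i * t i))%:E) (fun _ => 0).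

From HB Require Import structures.
From mathcomp Require Import all_boot all_order all_algebra.
From mathcomp Require Import all_classical all_reals all_analysis.
From mathcomp Require Import lra.
Set Implicit Arguments. Unset Strict Implicit. Unset Printing Implicit Defensive.
Import Order.TTheory GRing.Theory Num.Theory.
Local Open Scope classical_set_scope.
Local Open Scope ring_scope.

(* The integrand of [V_kappa chi_B (y)] is [chi_B(y_1 t_1, ..., y_n t_n)] with
   every [|t_i| <= 1], and for such [t] we have
   [<x, y t> <= <xbar, ybar> < cos theta], so [y t] never lies in [B(x, theta)].
   The integrand thus vanishes on the whole cube, and so does each of the
   iterated one-dimensional averages, whatever the weights. *)

Definition in_cube (R : realType) (n : nat) (t : 'I_n -> R) : Prop :=
  forall j, -1 <= t j <= 1.

Lemma in_cube0 (R : realType) (n : nat) : in_cube (fun _ : 'I_n => 0 : R).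
Proof. by move=> j; apply/andP; split; lra. Qed.

Lemma in_cube_upd (R : realType) (n : nat) (t : 'I_n -> R) i u :
  in_cube t -> -1 <= u <= 1 -> in_cube (upd t i u).
Proof. by move=> Ht Hu j; rewrite /upd; case: (j == i). Qed.

Lemma int1_eq0 (R : realType) (k : R) (g : R -> \bar R) :
  (forall u, -1 <= u <= 1 -> g u = 0%E) -> int1 k g = 0%E.
Proof.
move=> g0; rewrite /int1; case: (k == 0).
  by rewrite !g0 ?adde0 ?mul0e //; apply/andP; split; lra.
rewrite integral0_eq ?mule0 // => u /=; rewrite in_itv /= => Hu.
by rewrite g0 ?mule0.
Qed.

Lemma iterint_eq0 (R : realType) (n : nat) (kappa : 'I_n -> R) (s : seq 'I_n)
  (F : ('I_n -> R) -> \bar R) :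
  (forall t, in_cube t -> F t = 0%E) ->
  forall t, in_cube t -> iterint kappa s F t = 0%E.
Proof.
move=> F0; elim: s => [|i s IHs] t Ht /=; first exact: F0.
by apply: int1_eq0 => u Hu; apply/IHs/in_cube_upd.
Qed.

Lemma Vkappa_eq0 (R : realType) (n : nat) (kappa : 'I_n -> R)
  (f : ('I_n -> R) -> R) (y : 'I_n -> R) :
  (forall t, in_cube t -> f (fun i => y i * t i) = 0) -> Vkappa kappa f y = 0%E.
Proof.
move=> f0; apply: iterint_eq0 (@in_cube0 R n) => t Ht.
by rewrite f0.
Qed.

Lemma inner_scale_le_inner_vabs (R : realType) (n : nat) (x y t : 'I_n -> R) :
  in_cube t -> inner x (fun i => y i * t i) <= inner (vabs x) (vabs y).
Proof.
move=> Ht; rewrite /inner /vabs; apply: ler_sum => i _.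
rewrite mulrA; apply: (le_trans (ler_norm _)).
rewrite !normrM ler_piMr ?mulr_ge0 //.
by rewrite ler_norml; case/andP: (Ht i) => -> ->.
Qed.

Theorem lemma3p2 (R : realType) (d : nat) (kappa : 'I_d.+1 -> R)
  (hkappa : forall i, 0 <= kappa i)
  (x y : 'I_d.+1 -> R) (hx : vnorm x = 1) (hy : vnorm y = 1)
  (theta : R) (htheta : 0 <= theta <= pi)
  (hxy : inner (vabs x) (vabs y) < cos theta) :
  Vkappa kappa (\1_(Bcap x theta) : ('I_d.+1 -> R) -> R) y = 0%E.
Proof.
apply: Vkappa_eq0 => t Ht; rewrite indicE memNset //= => -[_ Hcos].
have := le_lt_trans (inner_scale_le_inner_vabs x y Ht) hxy.
by rewrite ltNge Hcos.
Qed.
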